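(* Let $\xi=\xi_{\{\mu\}}$ be a non-trivial GCKV on $\mathbb{E}^2$ with parameters $\mu=(\mu_0,\mu_1,\mu_2)$ and set $\mu_0':=\frac14(2\mu_0\mu_2-\mu_1^2)$. Let $\mathbb{A}_0\in SL(2,\mathbb{C})$ be any element of the form $\mathbb{A}_0=\begin{pmatrix}\frac12(\delta\mu_2-\gamma\mu_1)&\frac12\delta\mu_1-\gamma\mu_0\\ \gamma&\delta\end{pmatrix}$ with $\frac12\delta^2\mu_2-\gamma\delta\mu_1+\gamma^2\mu_0=1$. Then the set of all $\mathbb{A}\in SL(2,\mathbb{C})$ such that $\chi^{\mathbb{A}}_\star(\xi)$ is in canonical form is $\mathbb{A}_{\mu_0'}\cdot\mathbb{A}_0=\{\mathbb{B}\mathbb{A}_0:\mathbb{B}\in\mathbb{A}_{\mu_0'}\}$, where $\mathbb{A}_{c}:=\left\{\begin{pmatrix}\delta'&-\gamma' c\\ \gamma'&\delta'\end{pmatrix}:\delta'^2+c\gamma'^2=1\right\}$.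
   Context: $\mathbb{E}^2$ is the Euclidean plane with Cartesian coordinates $\{x,y\}$ and $z=\frac12(x-iy)$. A GCKV with parameters $\mu\in\mathbb{C}^3$ is $\xi_{\{\mu\}}=(\mu_0+\mu_1z+\frac12\mu_2z^2)\partial_z+(\bar\mu_0+\bar\mu_1\bar z+\frac12\bar\mu_2\bar z^2)\partial_{\bar z}$; it is in canonical form when $\mu_1=0,\mu_2=2$. For $\mathbb{A}=\begin{pmatrix}\alpha&\beta\\ \gamma&\delta\end{pmatrix}\in SL(2,\mathbb{C})$, $\chi^{\mathbb{A}}$ is the Möbius transformation $z\mapsto(\alpha z+\beta)/(\gamma z+\delta)$ of the Riemann sphere and $\chi^{\mathbb{A}}_\star$ denotes push-forward (which maps GCKVs to GCKVs). *)

From HB Require Import structures.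
From mathcomp Require Import all_boot all_order all_algebra.
From mathcomp Require Import complex.
From mathcomp Require Import reals.
Set Implicit Arguments. Unset Strict Implicit. Unset Printing Implicit Defensive.
Import Order.TTheory GRing.Theory Num.Theory.
Local Open Scope ring_scope.

Section Defs.
Variable R : realType.
Local Notation C := (R[i]).

(* The d/dz coefficient of the GCKV xi_{mu}: mu0 + mu1 z + 1/2 mu2 z^2.
   (The d/dzbar coefficient is its complex conjugate, hence determined.) *)
Definition gckv_coef (mu0 mu1 mu2 z : C) : C :=
  mu0 + mu1 * z + 2^-1 * mu2 * z ^+ 2.

Definition mx2 (a b c d : C) : 'M[C]_2 :=
  \matrix_(i < 2, j < 2)
    if i == 0 :> nat then (if j == 0 :> nat then a else b)
    else (if j == 0 :> nat then c else d).

Definition mobius (A : 'M[C]_2) (z : C) : C :=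
  (A 0 0 * z + A 0 1) / (A 1 0 * z + A 1 1).

Definition mobius_deriv (A : 'M[C]_2) (z : C) : C :=
  (A 0 0 * A 1 1 - A 0 1 * A 1 0) / (A 1 0 * z + A 1 1) ^+ 2.

(* chi^A_*(xi_{mu}) = xi_{nu}: the push-forward of a (holomorphic-part)
   vector field f(z) d_z under the holomorphic map chi is the field g(w) d_w
   with g(chi z) = chi'(z) f(z); we require this at every point z where
   chi^A is finite (the remaining point is determined by continuity). *)
Definition pushforward_is (A : 'M[C]_2) (mu0 mu1 mu2 nu0 nu1 nu2 : C) : Prop :=
  forall z : C, A 1 0 * z + A 1 1 != 0 ->
    gckv_coef nu0 nu1 nu2 (mobius A z) = mobius_deriv A z * gckv_coef mu0 mu1 mu2 z.

Definition push_canonical (A : 'M[C]_2) (mu0 mu1 mu2 : C) : Prop :=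
  exists nu0 : C, pushforward_is A mu0 mu1 mu2 nu0 0 2.

Definition A_set (c : C) (B : 'M[C]_2) : Prop :=
  exists g' d' : C, d' ^+ 2 + c * g' ^+ 2 = 1 /\ B = mx2 d' (- (g' * c)) g' d'.

End Defs.

From HB Require Import structures.
From mathcomp Require Import all_boot all_order all_algebra.
From mathcomp Require Import complex reals ring.
Set Implicit Arguments. Unset Strict Implicit. Unset Printing Implicit Defensive.
Import Order.TTheory GRing.Theory Num.Theory.
Local Open Scope ring_scope.

(* The coefficient of xi_mu is the dehomogenisation at (z, 1) of the binary
   quadratic form with Gram matrix G_mu = [[mu2/2, mu1/2], [mu1/2, mu0]].
   Clearing denominators, chi^A (det A = 1) pushes xi_mu to the canonical
   field with parameter nu0 iff G_mu = A^T diag(1, nu0) A, an identity of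
   quadratic polynomials in z.  Taking determinants forces nu0 = det G_mu =
   mu0', and A0 is one solution, so the solutions form the right coset of A0
   under the special orthogonal group of diag(1, mu0'), which is A_{mu0'}. *)

Section Congruence.
Variables (R : comUnitRingType) (n : nat).

Definition special_congruence (D M A : 'M[R]_n) : Prop :=
  \det A = 1 /\ A^T *m D *m A = M.

Lemma special_congruence_coset (D M A0 A : 'M[R]_n) :
  special_congruence D M A0 ->
  special_congruence D M A <->
  exists B, special_congruence D D B /\ A = B *m A0.
Proof.
move=> [detA0 A0DA0]; have uA0 : A0 \in unitmx by rewrite unitmxE detA0 unitr1.
split=> [[detA ADA] | [B [[detB BDB] ->]]].
- exists (A *m invmx A0); split; last by rewrite mulmxKV.
  split; first by rewrite det_mulmx det_inv detA detA0 invr1 mulr1.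
  rewrite trmx_mul mulmxA -(mulmxA _ A^T) -(mulmxA _ (A^T *m D)) ADA -A0DA0.
  by rewrite !mulmxA -trmx_mul mulmxV // trmx1 mul1mx mulmxK.
- split; first by rewrite det_mulmx detB mul1r.
  by rewrite trmx_mul -A0DA0 -{2}BDB !mulmxA.
Qed.
End Congruence.

Lemma det_congruence (R : comPzRingType) (n : nat) (D A : 'M[R]_n) :
  \det (A^T *m D *m A) = \det A ^+ 2 * \det D.
Proof. by rewrite !det_mulmx det_tr mulrAC expr2. Qed.

Lemma poly_eq0_of_horner0 (R : numDomainType) (p : {poly R}) :
  (forall x, p.[x] = 0) -> p = 0.
Proof.
move=> p0; apply: (@roots_geq_poly_eq0 _ p [seq i%:R | i <- iota 0 (size p)]).
- by apply/allP => x _; apply/rootP.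
- by rewrite map_inj_uniq ?iota_uniq // => m n /eqP; rewrite eqr_nat => /eqP.
- by rewrite size_map size_iota.
Qed.

Lemma quadratic_eq0_off_root (R : numDomainType) (c d al be ka : R) :
  (c != 0) || (d != 0) ->
  (forall z, c * z + d != 0 -> al * z ^+ 2 + be * z + ka = 0) ->
  [/\ al = 0, be = 0 & ka = 0].
Proof.
move=> cd_neq0 q0.
pose l : {poly R} := c *: 'X + d%:P.
pose q : {poly R} := al *: 'X^2 + be *: 'X + ka%:P.
have /eqP : l * q = 0.
  apply: poly_eq0_of_horner0 => z.
  rewrite hornerM !(hornerD, hornerZ, hornerXn, hornerX, hornerC).
  by have [->|/q0->] := eqVneq (c * z + d) 0; rewrite ?mul0r ?mulr0.
rewrite mulf_eq0 => /orP[/eqP l0 | /eqP q0'].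
  have := congr1 (coefp 0) l0; have := congr1 (coefp 1) l0.
  rewrite /= !coefE /= mulr1 mulr0 addr0 add0r => c0 d0.
  by rewrite c0 d0 eqxx in cd_neq0.
have := congr1 (coefp 0) q0'; have := congr1 (coefp 1) q0'.
have := congr1 (coefp 2) q0'.
by rewrite /= !coefE /= !(mulr0, mulr1, addr0, add0r).
Qed.

Section TwoByTwo.
Variable R : realType.
Local Notation C := (R[i]).
Implicit Types (a b c d : C) (A B : 'M[C]_2).

Lemma mx2E a b c d :
  [/\ mx2 a b c d 0 0 = a, mx2 a b c d 0 1 = b, mx2 a b c d 1 0 = c
    & mx2 a b c d 1 1 = d].
Proof. by rewrite !mxE. Qed.

Lemma mx2_eta A : A = mx2 (A 0 0) (A 0 1) (A 1 0) (A 1 1).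
Proof.
apply/matrixP => i j; rewrite !mxE.
by case: i => -[|[|//]] ?; case: j => -[|[|//]] ?; congr (A _ _); apply: val_inj.
Qed.

Lemma eq_mx2 a b c d a' b' c' d' :
  mx2 a b c d = mx2 a' b' c' d' <-> [/\ a = a', b = b', c = c' & d = d'].
Proof.
split=> [e | [-> -> -> ->] //].
by have [] := mx2E a b c d; rewrite e; have [-> -> -> ->] := mx2E a' b' c' d'.
Qed.

Lemma trmx_mx2 a b c d : (mx2 a b c d)^T = mx2 a c b d.
Proof. by rewrite [LHS]mx2_eta; apply/eq_mx2; rewrite !mxE. Qed.

Lemma mul_mx2 a b c d a' b' c' d' :
  mx2 a b c d *m mx2 a' b' c' d' =
  mx2 (a * a' + b * c') (a * b' + b * d') (c * a' + d * c') (c * b' + d * d').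
Proof.
rewrite [LHS]mx2_eta; apply/eq_mx2.
by rewrite !mxE !big_ord_recr !big_ord0 /= !mxE !add0r.
Qed.

Lemma det_mx2 a b c d : \det (mx2 a b c d) = a * d - b * c.
Proof.
rewrite (expand_det_row _ 0) !big_ord_recr big_ord0 /= /cofactor !det_mx11 !mxE /=.
by rewrite expr0 expr1 add0r !mul1r mulN1r mulrN.
Qed.

End TwoByTwo.

Section GramMatrices.
Variable R : realType.
Local Notation C := (R[i]).

Definition gram (mu0 mu1 mu2 : C) : 'M[C]_2 :=
  mx2 (2^-1 * mu2) (2^-1 * mu1) (2^-1 * mu1) mu0.

Definition canonical_gram (c : C) : 'M[C]_2 := mx2 1 0 0 c.

Lemma det_gram (mu0 mu1 mu2 : C) :
  \det (gram mu0 mu1 mu2) = 4^-1 * (2 * mu0 * mu2 - mu1 ^+ 2).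
Proof. by rewrite det_mx2; field. Qed.

Lemma det_canonical_gram (c : C) : \det (canonical_gram c) = c.
Proof. by rewrite det_mx2 mul1r mul0r subr0. Qed.

Lemma canonical_gram_congruence (a b c d nu : C) :
  (mx2 a b c d)^T *m canonical_gram nu *m mx2 a b c d =
  mx2 (a ^+ 2 + nu * c ^+ 2) (a * b + nu * c * d) (a * b + nu * c * d)
      (b ^+ 2 + nu * d ^+ 2).
Proof. by rewrite trmx_mx2 !mul_mx2; apply/eq_mx2; split; ring. Qed.

Lemma pushforward_canonicalE {a b c d mu0 mu1 mu2 nu : C} :
  a * d - b * c = 1 ->
  pushforward_is (mx2 a b c d) mu0 mu1 mu2 nu 0 2 <->
  forall z, c * z + d != 0 ->
    gckv_coef mu0 mu1 mu2 z = (a * z + b) ^+ 2 + nu * (c * z + d) ^+ 2.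
Proof.
move=> detA; rewrite /pushforward_is /mobius /mobius_deriv.
have [-> -> -> ->] := mx2E a b c d.
have cleared (z : C) : c * z + d != 0 ->
    (c * z + d) ^+ 2 * gckv_coef nu 0 2 ((a * z + b) / (c * z + d))
      = (a * z + b) ^+ 2 + nu * (c * z + d) ^+ 2.
  by move=> zP; rewrite /gckv_coef; field.
split=> push z zP.
  by rewrite -(cleared z zP) (push z zP) detA; field.
by apply: (mulfI (expf_neq0 2 zP)); rewrite cleared // -(push z zP) detA; field.
Qed.

Lemma pushforward_canonical_gram {a b c d mu0 mu1 mu2 nu : C} :
  a * d - b * c = 1 ->
  pushforward_is (mx2 a b c d) mu0 mu1 mu2 nu 0 2 <->
  (mx2 a b c d)^T *m canonical_gram nu *m mx2 a b c d = gram mu0 mu1 mu2.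
Proof.
move=> detA; apply: iff_trans (pushforward_canonicalE detA) _.
have two_neq0 : (2 : C) != 0 by rewrite pnatr_eq0.
rewrite canonical_gram_congruence /gram.
split=> [push | /eq_mx2[e2 e1 _ e0] z _]; last first.
  rewrite /gckv_coef -e2 -e0 -[mu1](mulVKf two_neq0) -e1; ring.
have cd_neq0 : (c != 0) || (d != 0).
  rewrite -negb_and; apply/negP => /andP[/eqP c0 /eqP d0].
  by move: detA; rewrite c0 d0 !mulr0 subrr => /eqP; rewrite eq_sym oner_eq0.
have [] := @quadratic_eq0_off_root _ c d (2^-1 * mu2 - (a ^+ 2 + nu * c ^+ 2))
  (mu1 - 2 * (a * b + nu * c * d)) (mu0 - (b ^+ 2 + nu * d ^+ 2)) cd_neq0.
  move=> z /push; rewrite /gckv_coef => fE.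
  transitivity (mu0 + mu1 * z + 2^-1 * mu2 * z ^+ 2
                - ((a * z + b) ^+ 2 + nu * (c * z + d) ^+ 2)); first by ring.
  by rewrite fE subrr.
move=> /subr0_eq<- /subr0_eq-> /subr0_eq<-.
by apply/eq_mx2; split=> //; rewrite mulKf.
Qed.

Lemma push_canonical_iff (A : 'M[C]_2) (mu0 mu1 mu2 : C) :
  \det A = 1 /\ push_canonical A mu0 mu1 mu2 <->
  special_congruence (canonical_gram (4^-1 * (2 * mu0 * mu2 - mu1 ^+ 2)))
                     (gram mu0 mu1 mu2) A.
Proof.
rewrite /push_canonical /special_congruence (mx2_eta A).
move: (A 0 0) (A 0 1) (A 1 0) (A 1 1) => a b c d; rewrite det_mx2.
split=> [[detA [nu /(pushforward_canonical_gram detA) congrA]] | [detA congrA]].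
  suff nuE : nu = 4^-1 * (2 * mu0 * mu2 - mu1 ^+ 2) by rewrite -nuE.
  rewrite -det_gram -congrA det_congruence det_mx2 detA.
  by rewrite expr1n mul1r det_canonical_gram.
split=> //; exists (4^-1 * (2 * mu0 * mu2 - mu1 ^+ 2)).
exact/pushforward_canonical_gram.
Qed.

Lemma special_orthogonal_canonical_gram (c : C) (B : 'M[C]_2) :
  special_congruence (canonical_gram c) (canonical_gram c) B <-> A_set c B.
Proof.
rewrite /special_congruence /A_set (mx2_eta B).
move: (B 0 0) (B 0 1) (B 1 0) (B 1 1) => p q r s.
rewrite det_mx2 canonical_gram_congruence.
split=> [[detB /eq_mx2[e00 e01 _ e11]] | [g [d' [norm /eq_mx2[-> -> -> ->]]]]].
  have qE : q * (p * s - q * r)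
           = s * (p * q + c * r * s) - r * (q ^+ 2 + c * s ^+ 2) by ring.
  have pE : p * (p * s - q * r)
           = s * (p ^+ 2 + c * r ^+ 2) - r * (p * q + c * r * s) by ring.
  rewrite detB e00 e01 e11 !mulr1 !mulr0 ?sub0r ?subr0 in qE pE.
  by exists r, p; rewrite qE -pE.
split; first by rewrite -norm; ring.
apply/eq_mx2; split; [exact: norm | ring | ring |].
by rewrite -[RHS]mulr1 -norm; ring.
Qed.

Lemma canonicalizer_special_congruence (mu0 mu1 mu2 gamma delta : C) :
  2^-1 * delta ^+ 2 * mu2 - gamma * delta * mu1 + gamma ^+ 2 * mu0 = 1 ->
  special_congruence (canonical_gram (4^-1 * (2 * mu0 * mu2 - mu1 ^+ 2)))
    (gram mu0 mu1 mu2)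
    (mx2 (2^-1 * (delta * mu2 - gamma * mu1)) (2^-1 * delta * mu1 - gamma * mu0)
         gamma delta).
Proof.
move=> norm.
(* det A0 and A0^T diag(1, mu0') A0 are the left side of [norm] times
   1 and G_mu respectively. *)
have scale (x y : C) :
    x = y * (2^-1 * delta ^+ 2 * mu2 - gamma * delta * mu1 + gamma ^+ 2 * mu0) ->
    x = y.
  by rewrite norm mulr1.
split; first by rewrite det_mx2; apply: scale; field.
rewrite canonical_gram_congruence /gram.
by apply/eq_mx2; split; apply: scale; field.
Qed.
End GramMatrices.

Theorem corollary7p4 (R : realType) (mu0 mu1 mu2 gamma delta : R[i]) :
  (mu0, mu1, mu2) != (0, 0, 0) ->
  2^-1 * delta ^+ 2 * mu2 - gamma * delta * mu1 + gamma ^+ 2 * mu0 = 1 ->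
  let mu0' := 4^-1 * (2 * mu0 * mu2 - mu1 ^+ 2) in
  let A0 := mx2 (2^-1 * (delta * mu2 - gamma * mu1))
                (2^-1 * delta * mu1 - gamma * mu0) gamma delta in
  forall A : 'M[R[i]]_2,
    (\det A = 1 /\ push_canonical A mu0 mu1 mu2) <->
    (exists B : 'M[R[i]]_2, A_set mu0' B /\ A = B *m A0).
Proof.
(* The non-triviality of mu already follows from the normalisation of A0. *)
move=> _ norm mu0' A0 A.
have A0_canonical := canonicalizer_special_congruence norm.
apply: iff_trans (push_canonical_iff _ _ _ _) _.
apply: iff_trans (special_congruence_coset _ A0_canonical) _.
by split=> -[B [/special_orthogonal_canonical_gram orthB ->]]; exists B.
Qed.
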